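(* For every finite set $X$ of proposals with $m=|X|\geq 3$, the rank-variance DSF $\Delta_{\mathit{var}}$ violates Uniform Reinforcement; that is, there exist a profile $R:N\to X!$ and a perfectly uniform profile $R^U:N'\to X!$ with $N\cap N'=\emptyset$ such that $\Delta_{\mathit{var}}(R)\neq\Delta_{\mathit{var}}(R\oplus R^U)$.
   Context: $X!$ is the set of strict linear orders on $X$. A profile is a function $R:N\to X!$ with $N\subset\mathbb{N}$ finite and nonempty. $\mathit{pos}^R_i(x)=1+|\{y: y \text{ ranked above } x \text{ by } R(i)\}|$. The rank-variance DSF is $\Delta_{\mathit{var}}(R)=\arg\max_{x\in X}\frac{1}{|N|}\sum_{i\in N}(\mathit{pos}^R_i(x)-\mu^R(x))^2$ where $\mu^R(x)=\frac{1}{|N|}\sum_{i\in N}\mathit{pos}^R_i(x)$. A profile is perfectly uniform if each of the $m!$ linear orders on $X$ is reported by the same number of agents. For profiles $R:N\to X!$, $R':N'\to X!$ with $N\cap N'=\emptyset$, $R\oplus R'$ is the profile on $N\cup N'$ agreeing with $R$ on $N$ and $R'$ on $N'$. A DSF $\Delta$ satisfies Uniform Reinforcement if $\Delta(R)=\Delta(R\oplus R^U)$ for every profile $R:N\to X!$ and every perfectly uniform profile $R^U:N'\to X!$ with $N\cap N'=\emptyset$. *)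

From HB Require Import structures.
From mathcomp Require Import all_boot all_order all_algebra.
From mathcomp Require Import finmap.
Set Implicit Arguments. Unset Strict Implicit. Unset Printing Implicit Defensive.
Import Order.TTheory GRing.Theory Num.Theory.
Local Open Scope fset_scope.

(* A strict linear order on X, as a boolean relation r, where r (x,y)
   means "x is ranked above y". *)
Definition is_linord (X : finType) (r : {ffun X * X -> bool}) : bool :=
  [&& [forall x, ~~ r (x, x)],
      [forall x, forall y, forall z, r (x, y) && r (y, z) ==> r (x, z)] &
      [forall x, forall y, (x != y) ==> r (x, y) || r (y, x)]].

Definition linord (X : finType) := {r : {ffun X * X -> bool} | is_linord r}.

Definition above (X : finType) (o : linord X) (x y : X) : bool := val o (x, y).

Definition pos (X : finType) (o : linord X) (x : X) : nat :=
  #|[set y | above o y x]|.+1.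

(* A profile: a finite set N of agents (natural numbers) and a ballot for
   each agent (values outside N are irrelevant). *)
Record profile (X : finType) := Profile {
  agents : {fset nat};
  ballot : nat -> linord X }.

Definition nonempty_profile (X : finType) (R : profile X) : bool :=
  agents R != fset0.

Local Open Scope ring_scope.

Definition mu (X : finType) (R : profile X) (x : X) : rat :=
  (\sum_(i <- agents R) (pos (ballot R i) x)%:R) / (#|` agents R|)%:R.

Definition rank_var (X : finType) (R : profile X) (x : X) : rat :=
  (\sum_(i <- agents R) ((pos (ballot R i) x)%:R - mu R x) ^+ 2)
    / (#|` agents R|)%:R.

Definition Delta_var (X : finType) (R : profile X) : {set X} :=
  [set x | [forall y, rank_var R y <= rank_var R x]].

Definition perfectly_uniform (X : finType) (R : profile X) : Prop :=
  exists k : nat, forall o : linord X,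
    count (fun i => ballot R i == o) (agents R) = k.

(* R (+) R' : agents N u N', agreeing with R on N and R' on N'
   (meaningful when N and N' are disjoint) *)
Definition oplus (X : finType) (R R' : profile X) : profile X :=
  Profile (agents R `|` agents R')
          (fun i => if i \in agents R then ballot R i else ballot R' i).

From mathcomp Require Import all_boot all_order all_algebra all_fingroup.
From mathcomp Require Import finmap.
From mathcomp Require Import ring lra.
Set Implicit Arguments. Unset Strict Implicit. Unset Printing Implicit Defensive.
Import Order.TTheory GRing.Theory Num.Theory.
Local Open Scope fset_scope.

(* Add one voter with a fixed ballot o to a perfectly uniform profile.  By
   symmetry, the first two moments of a proposal's rank over the uniform part
   do not depend on the proposal, so the rank variance in the combined
   profile is a strictly convex quadratic function of the proposal's position
   in o.  Hence the proposal ranked second in o has smaller variance than the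
   first or the last one, and is not selected; alone, the single voter gives
   every proposal variance 0, so all proposals are selected. *)

Section Moments.
Local Open Scope ring_scope.

Lemma mean_sqr_dev (R : numFieldType) (I : Type) (s : seq I) (f : I -> R) :
  let n := (size s)%:R in let m := (\sum_(i <- s) f i) / n in
  (0 < size s)%N ->
  (\sum_(i <- s) (f i - m) ^+ 2) / n = (\sum_(i <- s) f i ^+ 2) / n - m ^+ 2.
Proof.
move=> n m s_gt0.
rewrite (eq_bigr (fun i => f i ^+ 2 - f i * m *+ 2 + m ^+ 2)); last first.
  by move=> i _; rewrite sqrrB.
rewrite big_split sumrB /= sumrMnl -mulr_suml big_const_seq count_predT.
rewrite iter_addr addr0 /m -mulr_natr; field.
by rewrite pnatr_eq0 -lt0n.
Qed.

Lemma quadratic_interior_lt (R : realFieldType) (a b c p q r : R) :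
  0 < a -> p < q -> q < r ->
  let f t := a * t ^+ 2 + b * t + c in f q < f p \/ f q < f r.
Proof.
move=> a_gt0 pq qr f.
(* f q lies strictly below the chord through (p, f p) and (r, f r). *)
have chord : (r - p) * f q =
    (r - q) * f p + (q - p) * f r - a * (q - p) * (r - q) * (r - p).
  by rewrite /f; ring.
have gap : 0 < a * (q - p) * (r - q) * (r - p).
  by rewrite !mulr_gt0 // subr_gt0 // (lt_trans pq qr).
case: (ltP (f q) (f p)) => [|fpq]; [by left | right].
nra.
Qed.

End Moments.

Lemma card_enum_rank_lt (T : finType) (k : nat) : (k <= #|T|)%N ->
  #|[set y : T | (enum_rank y < k)%N]| = k.
Proof.
move=> le_k.
have widen_inj : injective (widen_ord le_k) by move=> i j [/val_inj].
rewrite -[RHS]card_ord -(card_imset _ (inj_comp enum_val_inj widen_inj)).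
apply: eq_card => y; rewrite inE; apply/idP/imsetP => [lt_yk | [i _ ->]].
- exists (Ordinal lt_yk) => //=.
  by apply: enum_rank_inj; rewrite enum_valK; apply: val_inj.
- by rewrite /= enum_valK /=.
Qed.

Section LinearOrders.
Variable X : finType.

Lemma rank_linord_subproof :
  is_linord [ffun p : X * X => (enum_rank p.1 < enum_rank p.2)%N].
Proof.
apply/and3P; split.
- by apply/forallP => x; rewrite ffunE ltnn.
- apply/'forall_'forall_'forall_implyP => x y z; rewrite !ffunE /= => /andP[].
  exact: ltn_trans.
- apply/'forall_'forall_implyP => x y neq_xy; rewrite !ffunE /=.
  by rewrite -neq_ltn val_eqE (inj_eq enum_rank_inj).
Qed.

Definition rank_linord : linord X :=
  exist (@is_linord X) _ rank_linord_subproof.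

Lemma pos_rank_linord x : pos rank_linord x = (enum_rank x).+1.
Proof.
rewrite /pos -[in RHS](card_enum_rank_lt (ltnW (ltn_ord (enum_rank x)))).
by congr S; apply: eq_card => y; rewrite !inE /above /= ffunE.
Qed.

Lemma relabel_linord_subproof (s : {perm X}) (o : linord X) :
  is_linord [ffun p : X * X => val o (s p.1, s p.2)].
Proof.
have /and3P[/forallP irr /forallP trans /forallP tot] := valP o.
apply/and3P; split.
- by apply/forallP => x; rewrite ffunE irr.
- apply/'forall_'forall_forallP => x y z; rewrite !ffunE /=.
  exact: (forallP (forallP (trans (s x)) (s y)) (s z)).
- apply/'forall_'forall_implyP => x y neq_xy; rewrite !ffunE /=.
  by apply: (implyP (forallP (tot (s x)) (s y))); rewrite (inj_eq perm_inj).
Qed.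

Definition relabel_linord (s : {perm X}) (o : linord X) : linord X :=
  exist (@is_linord X) _ (relabel_linord_subproof s o).

Lemma relabel_linordK s : cancel (relabel_linord s) (relabel_linord s^-1).
Proof. by move=> o; apply/val_inj/ffunP => -[x y]; rewrite !ffunE /= !permKV. Qed.

Lemma pos_relabel_linord s o x : pos (relabel_linord s o) x = pos o (s x).
Proof.
rewrite /pos; congr S; rewrite -[RHS](card_preimset _ (@perm_inj _ s)).
by apply: eq_card => y; rewrite !inE /above /= ffunE.
Qed.

Lemma big_pos_linord_sym (R : Type) (idx : R) (op : Monoid.com_law idx)
    (F : nat -> R) (x y : X) :
  \big[op/idx]_(o : linord X) F (pos o x) =
  \big[op/idx]_(o : linord X) F (pos o y).
Proof.
rewrite (reindex_inj (can_inj (relabel_linordK (tperm x y)))).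
by apply: eq_bigr => o _; rewrite pos_relabel_linord tpermL.
Qed.

End LinearOrders.

Section Profiles.
Local Open Scope ring_scope.
Variable X : finType.

Lemma rank_varE (R : profile X) x : nonempty_profile R ->
  rank_var R x =
  (\sum_(i <- agents R) (pos (ballot R i) x)%:R ^+ 2) / (#|` agents R|)%:R
  - mu R x ^+ 2.
Proof. by move=> R_neq0; apply: mean_sqr_dev; rewrite cardfs_gt0. Qed.

Definition single_voter (o : linord X) : profile X :=
  Profile [fset 0%N] (fun=> o).

Lemma Delta_var_single_voter o : Delta_var (single_voter o) = [set: X].
Proof.
suff var0 x : rank_var (single_voter o) x = 0.
  by apply/setP => x; rewrite !inE; apply/forallP => y; rewrite !var0.
by rewrite /rank_var /mu /= !big_seq_fset1 cardfs1 !divr1 subrr expr0n.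
Qed.

(* Agent (enum_rank o).+1 votes o; agent 0 is left free for the single voter. *)
Definition uniform_profile : profile X :=
  Profile [fset (enum_rank o : nat).+1 | o in {: linord X}]
          (fun i => nth (rank_linord X) (enum {: linord X}) i.-1).

Lemma big_uniform_profile (R : Type) (idx : R) (op : Monoid.com_law idx)
    (F : linord X -> R) :
  \big[op/idx]_(i <- agents uniform_profile) F (ballot uniform_profile i) =
  \big[op/idx]_(o : linord X) F o.
Proof.
rewrite big_imfset /=; last by move=> o o' _ _ [/val_inj/enum_rank_inj].
rewrite -big_enum (perm_big (enum {: linord X})) /=; last first.
  by apply: uniq_perm; rewrite ?enum_finmem_uniq ?enum_uniq.
by apply: eq_bigr => o _; rewrite nth_enum_rank.
Qed.

Lemma perfectly_uniform_uniform_profile : perfectly_uniform uniform_profile.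
Proof.
exists 1%N => o; rewrite -sum1_count big_mkcond.
rewrite (big_uniform_profile _ (fun o' => if o' == o then 1%N else 0%N)).
by rewrite (bigD1 o) //= eqxx big1 // => o' /negbTE ->.
Qed.

Lemma card_uniform_profile : #|` agents uniform_profile| = #|{: linord X}|.
Proof. by rewrite -sum1_size (big_uniform_profile _ (fun=> 1%N)) sum1_card. Qed.

Lemma uniform_profile_nonempty : nonempty_profile uniform_profile.
Proof.
rewrite /nonempty_profile -cardfs_gt0 card_uniform_profile.
by apply/card_gt0P; exists (rank_linord X).
Qed.

Lemma zero_notin_uniform_profile : (0 \notin agents uniform_profile)%N.
Proof. by apply/imfsetP => -[]. Qed.

Lemma big_single_voter_plus_uniform
    (R : Type) (idx : R) (op : Monoid.com_law idx) (o : linord X) (F : linord X -> R) :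
  let P := oplus (single_voter o) uniform_profile in
  \big[op/idx]_(i <- agents P) F (ballot P i) =
  op (F o) (\big[op/idx]_(o' : linord X) F o').
Proof.
rewrite /= big_fsetU1 ?zero_notin_uniform_profile // fset11 -big_uniform_profile.
rewrite !big_seq; congr (op _ _); apply: eq_bigr => i agent_i.
by rewrite ifN // inE; apply: contraNneq zero_notin_uniform_profile => <-.
Qed.

Lemma card_single_voter_plus_uniform (o : linord X) :
  #|` agents (oplus (single_voter o) uniform_profile)| = #|{: linord X}|.+1.
Proof. by rewrite /= cardfsU1 zero_notin_uniform_profile card_uniform_profile. Qed.

Lemma rank_var_single_voter_plus_uniform (o : linord X) (x0 : X) :
  exists a b c : rat, 0 < a /\ forall x,
    rank_var (oplus (single_voter o) uniform_profile) x =
    a * (pos o x)%:R ^+ 2 + b * (pos o x)%:R + c.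
Proof.
set P := oplus _ _; set K : rat := #|{: linord X}|%:R.
set S1 : rat := \sum_(o' : linord X) (pos o' x0)%:R.
set S2 : rat := \sum_(o' : linord X) (pos o' x0)%:R ^+ 2.
have K_gt0 : 0 < K by rewrite ltr0n; apply/card_gt0P; exists o.
exists (K / (K + 1) ^+ 2), (- (2 * S1) / (K + 1) ^+ 2),
  (((K + 1) * S2 - S1 ^+ 2) / (K + 1) ^+ 2).
split=> [|x]; first by rewrite divr_gt0 ?exprn_gt0 ?addr_gt0.
have P_neq0 : nonempty_profile P.
  by rewrite /nonempty_profile -cardfs_gt0 card_single_voter_plus_uniform.
rewrite rank_varE // /mu card_single_voter_plus_uniform.
rewrite (big_single_voter_plus_uniform _ _ (fun o' => (pos o' x)%:R ^+ 2)).
rewrite (big_single_voter_plus_uniform _ _ (fun o' => (pos o' x)%:R)).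
rewrite (big_pos_linord_sym _ _ x x0).
rewrite (big_pos_linord_sym _ (fun n => n%:R ^+ 2) x x0) -/S1 -/S2.
rewrite /= -natr1 -/K; field.
by rewrite lt0r_neq0 // addr_gt0.
Qed.

Lemma exists_notin_Delta_var_single_voter_plus_uniform :
  (3 <= #|X|)%N ->
  exists x,
    x \notin Delta_var (oplus (single_voter (rank_linord X)) uniform_profile).
Proof.
move=> X_ge3; set o := rank_linord X.
have X_gt0 : (0 < #|X|)%N by apply: leq_trans X_ge3.
have X_gt1 : (1 < #|X|)%N by apply: leq_trans X_ge3.
have X_gtm : (#|X|.-1 < #|X|)%N by rewrite ltn_predL.
have posE (i : 'I_#|X|) : pos o (enum_val i) = i.+1.
  by rewrite pos_rank_linord enum_valK.
set top := enum_val (Ordinal X_gt0); set second := enum_val (Ordinal X_gt1).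
set bottom := enum_val (Ordinal X_gtm).
have pos_bottom : pos o bottom = #|X| by rewrite posE prednK.
have [a [b [c [a_gt0 varE]]]] := rank_var_single_voter_plus_uniform o top.
exists second; rewrite inE negb_forall; apply/existsP.
have lt12 : 1%:R < 2%:R :> rat by rewrite ltr_nat.
have lt2m : 2%:R < #|X|%:R :> rat by rewrite ltr_nat.
have [lt|lt] := quadratic_interior_lt b c a_gt0 lt12 lt2m.
- by exists top; rewrite -ltNge !varE !posE.
- by exists bottom; rewrite -ltNge !varE pos_bottom posE.
Qed.

End Profiles.

Theorem proposition3 (X : finType) (hX : 3 <= #|X|) :
  exists (R RU : profile X),
    [/\ nonempty_profile R, nonempty_profile RU,
        agents R `&` agents RU = fset0,
        perfectly_uniform RU &
        Delta_var R != Delta_var (oplus R RU)].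
Proof.
have [x x_notin] := exists_notin_Delta_var_single_voter_plus_uniform hX.
exists (single_voter (rank_linord X)), (uniform_profile X); split.
- by apply/fset0Pn; exists 0%N; rewrite inE.
- exact: uniform_profile_nonempty.
- by apply/disjoint_fsetI0; rewrite fdisjoint1X zero_notin_uniform_profile.
- exact: perfectly_uniform_uniform_profile.
- by apply: contraNneq x_notin => <-; rewrite Delta_var_single_voter inE.
Qed.
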